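(* Consider an equation system $X=_\mu F$ where $F$ is a quantitative formula possibly containing $\min$. Suppose there are $u\in\mathbb{E}(D)$ with $[\![F^{\max}]\!](u)\le u$, a function $r\colon D\to[0,\infty)$ with $[\![\mathsf{D}(F^{\max})]\!](r)+u\le r$, and $\eta\in\mathbb{E}(D)$ with $\eta\le u$ and $[\![F]\!](\eta)\ge\eta$. Then $\eta$ is a lower bound of the least fixed point of $[\![F]\!]$, i.e. $\eta\le\mu[\![F]\!]$.
   Context: $\mathbb{E}(D)$ is the set of functions $D\to[0,\infty]$ with pointwise order and operations ($\infty+x=\infty$, $0\cdot\infty=0$, $r\cdot\infty=\infty$ for $r>0$). Quantitative formulas over a predicate variable $X$ (of type $D\to\Omega$) with minimum are: $F ::= X(\tilde e)\mid t\mid F_1+F_2\mid t\cdot F\mid \mathbf{if}\ \varphi\ \mathbf{then}\ F_1\ \mathbf{else}\ F_2\mid\min\{F_1,\dots,F_n\}$, with $\tilde e$ expressions, $t$ a $[0,\infty)$-valued term, $\varphi$ boolean; interpreted as maps $\mathbb{E}(D)\to\mathbb{E}(D)$ by $[\![X(e)]\!](\eta)(v)=\eta([\![e]\!](v))$, $[\![t]\!](\eta)(v)=[\![t]\!](v)$, pointwise sum and scalar product, case distinction for conditionals, and pointwise minimum for $\min$. $F^{\max}$ is obtained from $F$ by replacing every $\min$ by $\max$ (interpreted as pointwise maximum). $\mathsf{D}F$ is defined syntactically: $\mathsf{D}(X(\tilde e))=X(\tilde e)$, $\mathsf{D}t=0$, $\mathsf{D}(F_1+F_2)=\mathsf{D}F_1+\mathsf{D}F_2$,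 $\mathsf{D}(t\cdot F)=t\cdot\mathsf{D}F$, $\mathsf{D}(\mathbf{if}\ \varphi\ \mathbf{then}\ F_1\ \mathbf{else}\ F_2)=\mathbf{if}\ \varphi\ \mathbf{then}\ \mathsf{D}F_1\ \mathbf{else}\ \mathsf{D}F_2$, $\mathsf{D}(\min\{F_1,\dots,F_n\})=\min\{\mathsf{D}F_1,\dots,\mathsf{D}F_n\}$ (and likewise for $\max$). *)

From HB Require Import structures.
From mathcomp Require Import all_boot all_order all_algebra.
From mathcomp Require Import boolp classical_sets reals constructive_ereal ereal.
Set Implicit Arguments. Unset Strict Implicit. Unset Printing Implicit Defensive.
Import Order.TTheory GRing.Theory Num.Theory.
Local Open Scope ring_scope.
Local Open Scope classical_set_scope.
Definition nng0 (R : realType) : {nonneg R} := 0%:nng.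
Local Open Scope ereal_scope.

(* Quantitative formulas over one predicate variable X : D -> Omega.
   Expressions e are interpreted directly as maps D -> D, terms t as maps
   D -> [0,oo) ({nonneg R}), boolean guards phi as maps D -> bool.
   Fmin/Fmax are binary; the n-ary min{F1,..,Fn} (n >= 1) is a nesting. *)
Inductive qform (R : realType) (D : Type) : Type :=
| FX     : (D -> D) -> qform R D
| Fconst : (D -> {nonneg R}) -> qform R D
| Fadd   : qform R D -> qform R D -> qform R D
| Fscale : (D -> {nonneg R}) -> qform R D -> qform R D
| Fite   : (D -> bool) -> qform R D -> qform R D -> qform R D
| Fmin   : qform R D -> qform R D -> qform R D
| Fmax   : qform R D -> qform R D -> qform R D.

Arguments FX {R D}. Arguments Fconst {R D}. Arguments Fadd {R D}.
Arguments Fscale {R D}. Arguments Fite {R D}. Arguments Fmin {R D}.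
Arguments Fmax {R D}.

(* Semantics: a map E(D) -> E(D), with E(D) = D -> [0,oo] realised as
   D -> \bar R (values are nonnegative on nonnegative arguments). *)
Fixpoint sem (R : realType) (D : Type) (F : qform R D) (eta : D -> \bar R)
  : D -> \bar R :=
  match F with
  | FX e => fun v => eta (e v)
  | Fconst t => fun v => ((t v)%:num)%:E
  | Fadd F1 F2 => fun v => sem F1 eta v + sem F2 eta v
  | Fscale t F1 => fun v => ((t v)%:num)%:E * sem F1 eta v
  | Fite phi F1 F2 => fun v => if phi v then sem F1 eta v else sem F2 eta v
  | Fmin F1 F2 => fun v => Order.min (sem F1 eta v) (sem F2 eta v)
  | Fmax F1 F2 => fun v => Order.max (sem F1 eta v) (sem F2 eta v)
  end.

Fixpoint fmax (R : realType) (D : Type) (F : qform R D) : qform R D :=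
  match F with
  | FX e => FX e
  | Fconst t => Fconst t
  | Fadd F1 F2 => Fadd (fmax F1) (fmax F2)
  | Fscale t F1 => Fscale t (fmax F1)
  | Fite phi F1 F2 => Fite phi (fmax F1) (fmax F2)
  | Fmin F1 F2 => Fmax (fmax F1) (fmax F2)
  | Fmax F1 F2 => Fmax (fmax F1) (fmax F2)
  end.

Fixpoint fderiv (R : realType) (D : Type) (F : qform R D) : qform R D :=
  match F with
  | FX e => FX e
  | Fconst _ => Fconst (fun _ => nng0 R)
  | Fadd F1 F2 => Fadd (fderiv F1) (fderiv F2)
  | Fscale t F1 => Fscale t (fderiv F1)
  | Fite phi F1 F2 => Fite phi (fderiv F1) (fderiv F2)
  | Fmin F1 F2 => Fmin (fderiv F1) (fderiv F2)
  | Fmax F1 F2 => Fmax (fderiv F1) (fderiv F2)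
  end.

(* F is built from the grammar of the paper (possibly with min, no max) *)
Fixpoint max_free (R : realType) (D : Type) (F : qform R D) : Prop :=
  match F with
  | FX _ | Fconst _ => True
  | Fadd F1 F2 | Fite _ F1 F2 | Fmin F1 F2 => max_free F1 /\ max_free F2
  | Fscale _ F1 => max_free F1
  | Fmax _ _ => False
  end.

Definition inED (R : realType) (D : Type) (f : D -> \bar R) : Prop :=
  forall v, 0 <= f v.

Definition ple (R : realType) (D : Type) (f g : D -> \bar R) : Prop :=
  forall v, f v <= g v.

(* Least fixed point of a monotone map on the complete lattice E(D)
   (Knaster-Tarski): pointwise infimum of all prefixed points. *)
Definition lfp (R : realType) (D : Type) (phi : (D -> \bar R) -> D -> \bar R)
  : D -> \bar R :=
  fun v => ereal_inf [set g v | g in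
             [set g : D -> \bar R | inED g /\ ple (phi g) g]].

From mathcomp Require Import all_boot all_order all_algebra.
From mathcomp Require Import boolp classical_sets reals constructive_ereal ereal.
From mathcomp Require Import ring lra.
Set Implicit Arguments. Unset Strict Implicit. Unset Printing Implicit Defensive.
Import Order.TTheory GRing.Theory Num.Theory.
Local Open Scope ring_scope.
Local Open Scope ereal_scope.

(* Let g be any prefixed point of [sem F].  Since [sem (fderiv (fmax F))]
   bounds the growth of [sem F] and is positively homogeneous,
   [eta <= g + t r] implies [eta <= sem F eta <= g + t (r - u) <= g + t (r - eta)],
   i.e. [eta <= g + t/(1+t) r].  Starting from [eta <= u <= g + r] and iterating
   gives [eta <= g + r/(n+1)] for every [n], hence [eta <= g]. *)

Lemma sem_ge0 (R : realType) (D : Type) (G : qform R D) (x : D -> \bar R) :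
  inED x -> inED (sem G x).
Proof.
move=> x_ge0; elim: G => [e|t|G1 IH1 G2 IH2|t G1 IH1|p G1 IH1 G2 IH2|G1 IH1 G2 IH2|G1 IH1 G2 IH2] v /=.
- exact: x_ge0.
- by rewrite lee_fin.
- exact: adde_ge0.
- by apply: mule_ge0; rewrite ?lee_fin.
- by case: (p v).
- by rewrite le_min IH1 IH2.
- by rewrite le_max IH1.
Qed.

Lemma sem_leD_fderiv_fmax (R : realType) (D : Type) (G : qform R D)
    (x y d : D -> \bar R) :
  inED y -> inED d -> ple x (fun v => y v + d v) ->
  ple (sem G x) (fun v => sem G y v + sem (fderiv (fmax G)) d v).
Proof.
move=> y_ge0 d_ge0 xyd.
elim: G => [e|t|G1 IH1 G2 IH2|t G1 IH1|p G1 IH1 G2 IH2|G1 IH1 G2 IH2|G1 IH1 G2 IH2] v /=.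
- exact: xyd.
- by rewrite adde0.
- by rewrite addeACA; apply: leeD.
- rewrite -ge0_muleDr ?sem_ge0 //.
  by apply: lee_wpmul2l; rewrite ?lee_fin.
- by case: (p v).
- (* whichever branch attains the min on [y], the max of the increments covers it *)
  have [_|_] := leP (sem G1 y v) (sem G2 y v).
  + by rewrite ge_min (le_trans (IH1 v)) // leeD // le_max lexx.
  + by rewrite ge_min (le_trans (IH2 v)) ?orbT // leeD // le_max lexx orbT.
- rewrite ge_max (le_trans (IH1 v)) ?(le_trans (IH2 v)) //.
  + by rewrite leeD // le_max lexx orbT.
  + by rewrite leeD // le_max lexx.
Qed.

Lemma sem_fderivZ (R : realType) (D : Type) (G : qform R D) (x : D -> \bar R)
    (c : R) :
  inED x -> (0 <= c)%R ->
  sem (fderiv G) (fun w => c%:E * x w) =1 (fun v => c%:E * sem (fderiv G) x v).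
Proof.
move=> x_ge0 c_ge0.
elim: G => [e|t|G1 IH1 G2 IH2|t G1 IH1|p G1 IH1 G2 IH2|G1 IH1 G2 IH2|G1 IH1 G2 IH2] v /=.
- by [].
- by rewrite mule0.
- by rewrite IH1 IH2 ge0_muleDr ?sem_ge0.
- by rewrite IH1 muleCA.
- by case: (p v).
- by rewrite IH1 IH2 mine_pMr ?lee_fin.
- by rewrite IH1 IH2 maxe_pMr ?lee_fin.
Qed.

Lemma le_lfp (R : realType) (D : Type) (phi : (D -> \bar R) -> D -> \bar R)
    (f : D -> \bar R) :
  (forall g, inED g -> ple (phi g) g -> ple f g) -> ple f (lfp phi).
Proof. by move=> f_le v; apply/ereal_infP => _ [g [g_ge0 g_pre] <-]; exact: f_le. Qed.

Lemma lee_addinvSn (R : realType) (x y : \bar R) (c : R) :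
  (forall n, x <= y + (n.+1%:R^-1 * c)%:E) -> x <= y.
Proof.
move=> x_le; apply/lee_addgt0Pr => eps eps_gt0.
apply: le_trans (x_le (Num.truncn (c / eps))) _; apply: leeD => //.
rewrite lee_fin mulrC ler_pdivrMr ?ltr0n // mulrC -ler_pdivrMr //.
exact/ltW/truncnS_gt.
Qed.

Lemma invSn_div1D (R : realFieldType) (n : nat) :
  (n.+1%:R^-1 / (1 + n.+1%:R^-1) = n.+2%:R^-1 :> R)%R.
Proof.
rewrite -natr1 /=; field.
have n_ge0 : (0 <= n%:R :> R)%R by [].
by rewrite !lt0r_neq0 //; lra.
Qed.

Lemma lee_shrink (R : realType) (t c : R) (e a s g : \bar R) :
  (0 <= t)%R -> 0 <= g -> 0 <= e -> 0 <= s -> e <= a -> s + a <= c%:E ->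
  e <= g + t%:E * s -> e <= g + (t / (1 + t) * c)%:E.
Proof.
move=> t_ge0 g_ge0 e_ge0 s_ge0 ea sac.
case: g g_ge0 => [g| |] // g_ge0; last by move=> _; rewrite addye ?leey.
move: e a s e_ge0 s_ge0 ea sac => [e| |] [a| |] [s| |] //= e_ge0 s_ge0 ea sac.
rewrite -EFinM -!EFinD !lee_fin in g_ge0 e_ge0 s_ge0 ea sac *.
(* [(1 + t) (e - g) <= t s + t (e - g) <= t (s + a) <= t c] *)
rewrite mulrAC => egs; rewrite -lerBlDl ler_pdivlMr; first by nra.
by rewrite ltr_pwDl.
Qed.

Section PrefixedPointBound.
Variables (R : realType) (D : Type) (F : qform R D) (u : D -> \bar R).
Variables (r : D -> {nonneg R}) (eta g : D -> \bar R).

Let rE : D -> \bar R := fun v => ((r v)%:num)%:E.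
Let shifted (t : R) : D -> \bar R := fun v => g v + (t * (r v)%:num)%:E.

Hypotheses (eta_ge0 : inED eta) (g_ge0 : inED g).
Hypothesis r_bound : ple (fun v => sem (fderiv (fmax F)) rE v + u v) rE.
Hypothesis eta_le_u : ple eta u.
Hypothesis eta_postfixed : ple eta (sem F eta).
Hypothesis g_prefixed : ple (sem F g) g.

Lemma rE_ge0 : inED rE.
Proof. by move=> v; rewrite lee_fin. Qed.

Lemma u_le_rE : ple u rE.
Proof. by move=> v; apply: le_trans (r_bound v); exact/leeDr/sem_ge0/rE_ge0. Qed.

Lemma eta_le_shifted1 : ple eta (shifted 1).
Proof.
move=> v; rewrite /shifted mul1r (le_trans (eta_le_u v)) //.
by rewrite (le_trans (u_le_rE v)) ?leeDr.
Qed.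

Lemma eta_le_shifted_shrink (t : R) :
  (0 <= t)%R -> ple eta (shifted t) -> ple eta (shifted (t / (1 + t))).
Proof.
move=> t_ge0 eta_le v; rewrite /shifted.
have trE_ge0 : inED (fun w => t%:E * rE w).
  by move=> w; rewrite mule_ge0 ?rE_ge0 ?lee_fin.
apply: (lee_shrink t_ge0 (g_ge0 v) (eta_ge0 v) (sem_ge0 _ rE_ge0 v)
          (eta_le_u v) (r_bound v)).
apply: le_trans (eta_postfixed v) _.
have eta_le' : ple eta (fun w => g w + t%:E * rE w).
  by move=> w; rewrite -EFinM; exact: eta_le.
apply: le_trans (sem_leD_fderiv_fmax F g_ge0 trE_ge0 eta_le' v) _.
rewrite sem_fderivZ //; last exact: rE_ge0.
exact: leeD (g_prefixed v) (lexx _).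
Qed.

Lemma eta_le_shifted_invSn (n : nat) : ple eta (shifted n.+1%:R^-1).
Proof.
elim: n => [|n IH]; first by rewrite invr1; exact: eta_le_shifted1.
by rewrite -invSn_div1D; apply: eta_le_shifted_shrink; rewrite ?invr_ge0.
Qed.

Lemma eta_le_prefixed : ple eta g.
Proof.
move=> v; apply: (@lee_addinvSn _ _ _ (r v)%:num) => n.
exact: eta_le_shifted_invSn.
Qed.

End PrefixedPointBound.

Theorem theoremE4 (R : realType) (D : Type) (F : qform R D)
  (u : D -> \bar R) (r : D -> {nonneg R}) (eta : D -> \bar R) :
  max_free F ->
  inED u ->
  ple (sem (fmax F) u) u ->
  ple (fun v => sem (fderiv (fmax F)) (fun w => ((r w)%:num)%:E) v + u v)
      (fun v => ((r v)%:num)%:E) ->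
  inED eta ->
  ple eta u ->
  ple eta (sem F eta) ->
  ple eta (lfp (sem F)).
Proof.
move=> _ _ _ r_bound eta_ge0 eta_le_u eta_postfixed.
apply: le_lfp => g g_ge0 g_prefixed.
exact: (eta_le_prefixed eta_ge0 g_ge0 r_bound eta_le_u eta_postfixed g_prefixed).
Qed.
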